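(* Let $T$ be a compactum, $\mathbf a,\mathbf b,\mathbf c$ entourages of $T$, $p\in T$ and $k>2$. If $\mathbf a-\mathbf b-p\ (k)$ and $\mathbf b-\mathbf c-p\ (k)$, then $\mathbf a-\mathbf c-p\ (k)$.
   Context: Let $T$ be a compact Hausdorff space, $S^2T$ the space of unordered pairs of points of $T$ (diagonal allowed), $\Delta^2T$ the diagonal. An entourage is a neighborhood of $\Delta^2T$ in $S^2T$. For an entourage $\mathbf e$, $\Delta_{\mathbf e}$ is the graph distance on $T$ of the graph with vertex set $T$ and edges the pairs in $\mathbf e$; for sets, $\Delta_{\mathbf e}(a,b)=\inf$ over $x\in a,y\in b$ and $\widetilde\Delta_{\mathbf e}(a,b)=\sup$. A set is $\mathbf e$-small if its $\Delta_{\mathbf e}$-diameter is $\le1$. Entourages $\mathbf a,\mathbf b$ are unlinked ($\mathbf a\bowtie\mathbf b$) if $T=a\cup b$ for some $\mathbf a$-small $a$ and $\mathbf b$-small $b$, linked otherwise. Standing conventions: every entourage considered is linked with itself and $T$ has $\Delta_{\mathbf a}$-diameter $>4$. For $\mathbf a\bowtie\mathbf b$, $\mathrm{sh}_{\mathbf a}\mathbf b=\bigcap\{a: a\ \mathbf a\text{-small},\ T\setminus a\ \mathbf b\text{-small}\}$. For $p\in T$, $\mathbf a-\mathbf b-p\ (k)$ means $\mathbf a\bowtie\mathbf b$ and $\Delta_{\mathbf b}(\mathrm{sh}_{\mathbf b}\mathbf a,b)>k$ for every $\mathbf b$-small neighborhood $b$ of $p$. *)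

From Stdlib Require Import List Arith.

Definition is_topology {T : Type} (op : (T -> Prop) -> Prop) : Prop :=
  op (fun _ => True) /\
  op (fun _ => False) /\
  (forall U V, op U -> op V -> op (fun x => U x /\ V x)) /\
  (forall F : (T -> Prop) -> Prop, (forall U, F U -> op U) ->
     op (fun x => exists U, F U /\ U x)).

Definition compact_sp {T : Type} (op : (T -> Prop) -> Prop) : Prop :=
  forall (I : Type) (U : I -> T -> Prop),
    (forall i, op (U i)) -> (forall x, exists i, U i x) ->
    exists l : list I, forall x, exists i, In i l /\ U i x.

Definition hausdorff {T : Type} (op : (T -> Prop) -> Prop) : Prop :=
  forall x y : T, x <> y ->
    exists U V, op U /\ op V /\ U x /\ V y /\ (forall z, U z -> V z -> False).

Definition compactum {T : Type} (op : (T -> Prop) -> Prop) : Prop :=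
  is_topology op /\ compact_sp op /\ hausdorff op.

Definition prod_open {T : Type} (op : (T -> Prop) -> Prop) (W : T -> T -> Prop) : Prop :=
  forall x y, W x y -> exists U V, op U /\ op V /\ U x /\ V y /\
    (forall u v, U u -> V v -> W u v).

Definition nbhd {T : Type} (op : (T -> Prop) -> Prop) (B : T -> Prop) (p : T) : Prop :=
  exists U, op U /\ U p /\ (forall x, U x -> B x).

(* A subset of S^2 T is encoded by its preimage in T x T, i.e. a symmetric
   relation.  S^2 T carries the quotient topology, so a symmetric relation e
   is a neighbourhood of the diagonal of S^2 T iff it contains an open
   (product topology) subset W of T x T containing the diagonal. *)
Definition entourage {T : Type} (op : (T -> Prop) -> Prop) (e : T -> T -> Prop) : Prop :=
  (forall x y, e x y -> e y x) /\
  exists W, prod_open op W /\ (forall x, W x x) /\ (forall x y, W x y -> e x y).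

(* walk e n x y : there is an e-path of at most n edges from x to y,
   i.e. Delta_e(x,y) <= n *)
Inductive walk {T : Type} (e : T -> T -> Prop) : nat -> T -> T -> Prop :=
  | walk_refl : forall n x, walk e n x x
  | walk_step : forall n x y z, walk e n x y -> e y z -> walk e (S n) x z.

Definition dist_le {T : Type} (e : T -> T -> Prop) (x y : T) (n : nat) : Prop :=
  walk e n x y.

(* Delta_e(A,B) > k  (infimum over x in A, y in B; distances are in N u {oo},
   so the infimum exceeds k iff every distance does) *)
Definition setdist_gt {T : Type} (e : T -> T -> Prop) (A B : T -> Prop) (k : nat) : Prop :=
  forall x y, A x -> B y -> ~ dist_le e x y k.

Definition small {T : Type} (e : T -> T -> Prop) (A : T -> Prop) : Prop :=
  forall x y, A x -> A y -> dist_le e x y 1.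

Definition diam_gt4 {T : Type} (e : T -> T -> Prop) : Prop :=
  exists x y : T, ~ dist_le e x y 4.

Definition unlinked {T : Type} (a b : T -> T -> Prop) : Prop :=
  exists A B : T -> Prop, small a A /\ small b B /\ (forall x, A x \/ B x).

Definition linked {T : Type} (a b : T -> T -> Prop) : Prop := ~ unlinked a b.

Definition sh {T : Type} (a b : T -> T -> Prop) : T -> Prop :=
  fun x => forall A : T -> Prop, small a A -> small b (fun y => ~ A y) -> A x.

Definition abp {T : Type} (op : (T -> Prop) -> Prop)
    (a b : T -> T -> Prop) (p : T) (k : nat) : Prop :=
  unlinked a b /\
  forall B : T -> Prop, small b B -> nbhd op B p -> setdist_gt b (sh b a) B k.

(* standing conventions on every entourage considered *)
Definition std_entourage {T : Type} (op : (T -> Prop) -> Prop) (e : T -> T -> Prop) : Prop :=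
  entourage op e /\ linked e e /\ diam_gt4 e.

(* Write [M] for a [c]-small neighbourhood of [p].  The shadow [sh_c b] is
   nonempty and [k]-far from [M], so every [c]-small [C] whose complement is
   [b]-small misses [M]; hence [T \ C] is a [b]-small neighbourhood of [p].
   Running the same argument with [a - b - p (k)] shows that [T \ C] lies in the
   [a]-small half of a covering witnessing [a] unlinked from [b].  So every
   such cut for the pair ([c], [b]) is a cut for ([c], [a]), which gives both
   [a] unlinked from [c] and [sh_c a] contained in [sh_c b]. *)
From Stdlib Require Import Lia Classical.

Lemma walk_mono {T : Type} (e : T -> T -> Prop) n x y :
  walk e n x y -> forall m, n <= m -> walk e m x y.
Proof.
  induction 1 as [n x|n x y z W IH E]; intros m Hm.
  - constructor.
  - destruct m as [|m]; [lia|]. apply walk_step with y; auto. apply IH; lia.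
Qed.

Lemma walk_trans {T : Type} (e : T -> T -> Prop) n x y :
  walk e n x y -> forall m z, walk e m y z -> walk e (m + n) x z.
Proof.
  intros W1 m z W2. induction W2 as [m y|m y w z W IH E].
  - apply walk_mono with n; auto; lia.
  - simpl. apply walk_step with w; auto.
Qed.

Lemma small_sub {T : Type} (e : T -> T -> Prop) (A B : T -> Prop) :
  small e A -> (forall x, B x -> A x) -> small e B.
Proof. intros HA HBA x y Bx By. apply HA; auto. Qed.

Lemma small_compl_of_cover {T : Type} (e : T -> T -> Prop) (A B : T -> Prop) :
  small e A -> (forall x, A x \/ B x) -> small e (fun x => ~ B x).
Proof.
  intros HA Hcov. apply small_sub with A; auto.
  intros x nBx. destruct (Hcov x); tauto.
Qed.

Lemma nbhd_mono {T : Type} (op : (T -> Prop) -> Prop) (A B : T -> Prop) p :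
  nbhd op A p -> (forall x, A x -> B x) -> nbhd op B p.
Proof. intros [U [HU [Up UA]]] AB. exists U. auto. Qed.

Lemma small_nbhd_exists {T : Type} (op : (T -> Prop) -> Prop) (e : T -> T -> Prop) p :
  is_topology op -> entourage op e -> exists M, small e M /\ nbhd op M p.
Proof.
  intros [_ [_ [Hint _]]] [_ [W [HW [HWd HWe]]]].
  destruct (HW p p (HWd p)) as [U [V [HU [HV [Up [Vp HUV]]]]]].
  exists (fun x => U x /\ V x). split.
  - intros x y [Ux _] [_ Vy]. apply walk_step with x; [constructor | auto].
  - exists (fun x => U x /\ V x). auto.
Qed.

(* Two failures of membership in [sh b a] give two [b]-small sets whose union
   is [T] unless their complements link [u] to [v] by an [a]-path of length 2. *)
Lemma sh_nonempty {T : Type} (a b : T -> T -> Prop) u v :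
  ~ dist_le a u v 2 -> linked b b -> exists x, sh b a x.
Proof.
  intros Huv Hl.
  destruct (classic (sh b a u)) as [Hu|Hu]; [eauto|].
  destruct (classic (sh b a v)) as [Hv|Hv]; [eauto|].
  exfalso. unfold sh in Hu, Hv.
  apply not_all_ex_not in Hu as [A1 H1].
  apply not_all_ex_not in Hv as [A2 H2].
  destruct (classic (small b A1)) as [S1|S1]; [|tauto].
  destruct (classic (small a (fun y => ~ A1 y))) as [S1'|S1']; [|tauto].
  destruct (classic (small b A2)) as [S2|S2]; [|tauto].
  destruct (classic (small a (fun y => ~ A2 y))) as [S2'|S2']; [|tauto].
  apply Hl. exists A1, A2. repeat split; auto.
  intro x. destruct (classic (A1 x)); auto. destruct (classic (A2 x)); auto.
  exfalso. apply Huv.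
  exact (walk_trans _ _ _ _ (S1' u x ltac:(tauto) H) _ _ (S2' x v H0 ltac:(tauto))).
Qed.

Lemma diam_gt4_dist_gt2 {T : Type} (e : T -> T -> Prop) :
  diam_gt4 e -> exists u v, ~ dist_le e u v 2.
Proof.
  intros [u [v Huv]]. exists u, v. intro W. apply Huv. apply walk_mono with 2; auto.
Qed.

(* The cut [A] contains the whole shadow, so a point of [A] would be within
   distance 1 of it. *)
Lemma far_from_sh_avoids_cut {T : Type} (e f : T -> T -> Prop) (A B : T -> Prop) x0 k :
  0 < k -> sh e f x0 -> setdist_gt e (sh e f) B k ->
  small e A -> small f (fun y => ~ A y) -> forall z, B z -> ~ A z.
Proof.
  intros Hk Hx0 Hfar HA HA' z Bz Az.
  apply (Hfar x0 z Hx0 Bz). apply walk_mono with 1; [|lia].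
  apply HA; [apply Hx0 |]; auto.
Qed.

Lemma sh_sub_of_cuts {T : Type} (a b c : T -> T -> Prop) :
  (forall C, small c C -> small b (fun y => ~ C y) -> small a (fun y => ~ C y)) ->
  forall x, sh c a x -> sh c b x.
Proof. intros Hcut x Hx C HC HC'. apply Hx; auto. Qed.

Lemma unlinked_of_cuts {T : Type} (a b c : T -> T -> Prop) :
  (forall C, small c C -> small b (fun y => ~ C y) -> small a (fun y => ~ C y)) ->
  unlinked b c -> unlinked a c.
Proof.
  intros Hcut [B [C [HB [HC Hcov]]]].
  exists (fun y => ~ C y), C. repeat split; auto.
  - apply Hcut; auto. apply small_compl_of_cover with B; auto.
  - intro x. destruct (classic (C x)); auto.
Qed.

Lemma setdist_gt_antitone {T : Type} (e : T -> T -> Prop) (A A' B : T -> Prop) k :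
  (forall x, A' x -> A x) -> setdist_gt e A B k -> setdist_gt e A' B k.
Proof. intros HA Hd x y Ax By. apply Hd; auto. Qed.

Lemma cuts_transfer {T : Type} (op : (T -> Prop) -> Prop) (a b c : T -> T -> Prop) p k :
  0 < k -> (exists M, small c M /\ nbhd op M p) ->
  (exists x, sh b a x) -> (exists y, sh c b y) ->
  abp op a b p k -> abp op b c p k ->
  forall C, small c C -> small b (fun y => ~ C y) -> small a (fun y => ~ C y).
Proof.
  intros Hk [M [HM HMp]] [x0 Hx0] [y0 Hy0] [[A0 [B0 [HA0 [HB0 Hcov]]]] Hab] [_ Hbc]
    C HC HC'.
  assert (HCp : nbhd op (fun y => ~ C y) p).
  { apply nbhd_mono with M; auto.
    exact (far_from_sh_avoids_cut _ _ _ _ _ _ Hk Hy0 (Hbc M HM HMp) HC HC'). }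
  apply small_sub with A0; auto.
  intros z nCz. destruct (Hcov z) as [|B0z]; auto. exfalso.
  refine (far_from_sh_avoids_cut _ _ _ _ _ _ Hk Hx0 (Hab _ HC' HCp) HB0 _ z nCz B0z).
  apply small_compl_of_cover with A0; auto.
Qed.

Theorem lemma3p17 (T : Type) (op : (T -> Prop) -> Prop) (HT : compactum op)
  (a b c : T -> T -> Prop)
  (Ha : std_entourage op a) (Hb : std_entourage op b) (Hc : std_entourage op c)
  (p : T) (k : nat) (Hk : 2 < k) :
  abp op a b p k -> abp op b c p k -> abp op a c p k.
Proof.
  intros Habp Hbcp.
  destruct Ha as [_ [_ Hda]], Hb as [_ [Hlb Hdb]], Hc as [Hec [Hlc _]].
  destruct HT as [Htop _].
  destruct (diam_gt4_dist_gt2 a Hda) as [u [v Huv]].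
  destruct (diam_gt4_dist_gt2 b Hdb) as [u' [v' Huv']].
  pose proof (cuts_transfer op a b c p k ltac:(lia)
    (small_nbhd_exists op c p Htop Hec) (sh_nonempty a b u v Huv Hlb)
    (sh_nonempty b c u' v' Huv' Hlc) Habp Hbcp) as Hcut.
  split.
  - apply (unlinked_of_cuts a b c Hcut). apply Hbcp.
  - intros C HC HCp. apply setdist_gt_antitone with (sh c b).
    + exact (sh_sub_of_cuts a b c Hcut).
    + apply Hbcp; auto.
Qed.
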